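(* Let $\Omega$ be a zigzag continual diagram, let $\epsilon>0$, let $f(x)=x+b$ with $b>0$, let $z_+$ be the maximal real number with $f(z_+)=\Omega(z_+-\epsilon)+\epsilon$, and let $\overline{\Omega}=\overline{\Omega}_{\Omega,\epsilon,f}$ be the $\epsilon$-shift of $\Omega$ along $f$. Then for every non-negative function $\phi\colon\mathbb{R}\to\mathbb{R}_+$, \[\int_{-\infty}^{\infty}\phi(z)\,d\mu_{\overline{\Omega}}(z)\ \ge\ \int_{-\infty}^{\infty}\phi(z+\epsilon)\,P^{\min}_{z_+}(z+\epsilon)\,d\mu_\Omega(z).\]
   Context: A continual diagram is a function $\omega\colon\mathbb{R}\to\mathbb{R}_+$ such that $|\omega(z_1)-\omega(z_2)|\le|z_1-z_2|$ for all $z_1,z_2$, and $\omega(z)=|z|$ for all sufficiently large $|z|$. It is a zigzag if it is piecewise affine with slopes only $\pm1$; then, with its local minima at $\mathbbm{x}_0<\dots<\mathbbm{x}_L$ and local maxima at $\mathbbm{y}_1<\dots<\mathbbm{y}_L$, its Cauchy transform is $\mathbf{G}_\omega(z)=\prod_{i=1}^L(z-\mathbbm{y}_i)/\prod_{i=0}^L(z-\mathbbm{x}_i)$, which decomposes as $\sum_i p_i/(z-\mathbbm{x}_i)$ with $p_i>0$, $\sum p_i=1$, and the transition measure is $\mu_\omega=\sum_i p_i\delta_{\mathbbm{x}_i}$. For a general continual diagram, $\log[z\,\mathbf{G}_\omega(z)]=-\int_{-\infty}^\infty\frac{1}{z-w}\big(\frac{\omega(w)-|w|}{2}\big)'\,dw$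 ($z\in\mathbb{C}\setminus\mathbb{R}$) and $\mu_\omega$ is the probability measure with $\mathbf{G}_\omega(z)=\int\frac{d\mu_\omega(x)}{z-x}$ (this agrees with the zigzag definition). $\epsilon$-shift: $\overline{\Omega}_{\Omega,\epsilon,f}(z)=\min\big[\max[\Omega(z-\epsilon)-\epsilon,\ f(z)],\ \Omega(z-\epsilon)+\epsilon\big]$. For real $z_+$ (and the fixed $\epsilon$): $P^{\min}_{z_+}(z)=\frac{z-z_+}{z+\epsilon-z_+}$ for $z\ge z_+$, and $P^{\min}_{z_+}(z)=0$ otherwise. *)

From mathcomp Require Import all_boot all_order all_algebra.
From mathcomp Require Import reals.
Set Implicit Arguments. Unset Strict Implicit. Unset Printing Implicit Defensive.
Import Order.TTheory GRing.Theory Num.Theory.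
Local Open Scope ring_scope.

Section Defs.
Variable R : realType.

Definition continual_diagram (w : R -> R) : Prop :=
  (forall z, 0 <= w z) /\
  (forall z1 z2, `|w z1 - w z2| <= `|z1 - z2|) /\
  (exists M : R, forall z, M <= `|z| -> w z = `|z|).

Definition zigzag (w : R -> R) : Prop :=
  continual_diagram w /\
  exists s : seq R, forall a b, a < b -> (forall t, t \in s -> ~ (a < t < b)) ->
    (forall z, a <= z <= b -> w z = w a + (z - a)) \/
    (forall z, a <= z <= b -> w z = w a - (z - a)).

Definition is_local_min (w : R -> R) (x : R) : Prop :=
  exists d : R, 0 < d /\ forall z, `|z - x| < d -> w x <= w z.
Definition is_local_max (w : R -> R) (x : R) : Prop :=
  exists d : R, 0 < d /\ forall z, `|z - x| < d -> w z <= w x.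

Definition zigzag_extrema (w : R -> R) (xs ys : seq R) : Prop :=
  sorted <%R xs /\ sorted <%R ys /\
  (forall x, is_local_min w x <-> x \in xs) /\
  (forall y, is_local_max w y <-> y \in ys).

(* p_i: coefficient of 1/(z - x_i) in the partial fraction decomposition of
   G(z) = prod_j (z - y_j) / prod_i (z - x_i), i.e. its residue at x_i *)
Definition zigzag_weight (xs ys : seq R) (i : nat) : R :=
  (\prod_(y <- ys) (xs`_i - y)) /
  (\prod_(j < size xs | j != i :> nat) (xs`_i - xs`_j)).

(* integral of phi against mu_w = sum_i p_i delta_{x_i} *)
Definition transition_integral (xs ys : seq R) (phi : R -> R) : R :=
  \sum_(i < size xs) zigzag_weight xs ys i * phi xs`_i.

Definition eps_shift (Om : R -> R) (eps : R) (f : R -> R) (z : R) : R :=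
  Num.min (Num.max (Om (z - eps) - eps) (f z)) (Om (z - eps) + eps).

Definition Pmin (eps zp : R) (z : R) : R :=
  if zp <= z then (z - zp) / (z + eps - zp) else 0.

End Defs.

From mathcomp Require Import all_boot all_order all_algebra.
From mathcomp Require Import reals exp.
From mathcomp Require Import ring lra zify.
Import Order.TTheory GRing.Theory Num.Theory.
Local Open Scope ring_scope.
Set Implicit Arguments. Unset Strict Implicit. Unset Printing Implicit Defensive.

(* Write W z := Om (z - eps), whose transition measure is that of Om
   translated by eps, so that the eps-shift is the clamp of z + b between
   W - eps and W + eps.  W and the eps-shift are zigzags with a common finite
   set of breakpoints t 0 < ... < t n, and for such a zigzag the residue of the
   Cauchy transform at a local minimum t k factors over the segments: a rising
   segment [t i, t i.+1] left of t k contributes (t k - t i.+1) / (t k - t i),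
   a falling one right of t k contributes (t k - t i) / (t k - t i.+1).
   Right of the crossing zp the shift equals W + eps, so a local minimum
   x > zp of W is one of the shift and only the factors of the segments left
   of zp differ.  There the shift stays above W - eps and ends at W + eps;
   after taking logarithms, Abel summation against the increasing chord slopes
   of - ln (x - .) shows that its factors dominate those of W times
   (x - zp) / (x + eps - zp) = Pmin eps zp x.  Minima x <= zp carry
   Pmin eps zp x = 0, and all weights of the shift are nonnegative. *)

Section Breakpoints.
Variable R : realType.
Implicit Types (h : R -> R) (t : nat -> R).

Definition increasing_upto t n := forall i, (i < n)%N -> t i < t i.+1.

Lemma increasing_le t n i j : increasing_upto t n ->
  (i <= j)%N -> (j <= n)%N -> t i <= t j.
Proof.
move=> H; elim: j => [|j IH]; first by rewrite leqn0 => /eqP ->.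
rewrite leq_eqVlt => /orP[/eqP->//| ij] jn.
exact: le_trans (IH ij (ltnW jn)) (ltW (H j jn)).
Qed.

Lemma increasing_lt t n i j : increasing_upto t n ->
  (i < j)%N -> (j <= n)%N -> t i < t j.
Proof.
move=> H ij jn; apply: lt_le_trans (H i (leq_trans ij jn)) _.
exact: increasing_le H ij jn.
Qed.

Lemma increasing_eq t n i j : increasing_upto t n ->
  (i <= n)%N -> (j <= n)%N -> (t i == t j) = (i == j).
Proof.
move=> H iN jN; apply/eqP/eqP => [E|->//]; case: (ltngtP i j) => // ij.
- by have := increasing_lt H ij jN; rewrite E ltxx.
- by have := increasing_lt H ij iN; rewrite E ltxx.
Qed.

Lemma increasing_locate t n x : increasing_upto t n -> t 0 <= x -> x < t n ->
  exists i, [/\ (i < n)%N, t i <= x & x < t i.+1].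
Proof.
elim: n => [|n IH] H x0 xn; first by move: (le_lt_trans x0 xn); rewrite ltxx.
have [xl|xg] := ltP x (t n); last by exists n.
have [|i [? ? ?]] := IH _ x0 xl; first by move=> i ?; apply: H; lia.
by exists i; split => //; lia.
Qed.

Definition rising h t i := h (t i) < h (t i.+1).

Definition signed (d : bool) (w : R) := if d then w else - w.

Definition unit_affine_on h a c :=
  (forall z, a <= z <= c -> h z = h a + (z - a)) \/
  (forall z, a <= z <= c -> h z = h a - (z - a)).

Record pl_breaks h t n : Prop := PLBreaks {
  pl_increasing : increasing_upto t n;
  pl_affine : forall i, (i < n)%N -> unit_affine_on h (t i) (t i.+1);
  pl_left_tail : forall z, z <= t 0 -> h z = h (t 0) - (z - t 0);
  pl_right_tail : forall z, t n <= z -> h z = h (t n) + (z - t n);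
  pl_size_gt0 : (0 < n)%N;
  (* the last two fields keep [t 0] and [t n] from being extrema *)
  pl_first_falls : ~~ rising h t 0;
  pl_last_rises : rising h t n.-1 }.

Lemma pl_segment h t n i : pl_breaks h t n -> (i < n)%N ->
  forall z, t i <= z <= t i.+1 -> h z = h (t i) + signed (rising h t i) (z - t i).
Proof.
case=> H Hp _ _ _ _ _ iN; have ti := H i iN.
have [P|P] := Hp i iN => z zi; rewrite /signed /rising (P (t i.+1)) ?lexx ?ltW // P //.
- by rewrite ifT //; lra.
- by rewrite ifF //; apply/negbTE; rewrite -leNgt; lra.
Qed.

Definition side_slopes h x (dL dR : bool) := exists2 d : R, 0 < d &
  (forall z, x - d <= z <= x -> h z = h x - signed dL (x - z)) /\
  (forall z, x <= z <= x + d -> h z = h x + signed dR (z - x)).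

Lemma side_slopes_local_min h x dL dR :
  side_slopes h x dL dR -> is_local_min h x <-> ~~ dL && dR.
Proof.
move=> [d d0 [HL HR]]; split => [[e [e0 He]]|/andP[/negbTE nL HdR]].
  pose c := Num.min d e / 2.
  have c0 : 0 < c by rewrite divr_gt0 // lt_min d0 e0.
  have [cd ce] : c <= d /\ c < e.
    have [md me] : Num.min d e <= d /\ Num.min d e <= e by rewrite !ge_min !lexx orbT.
    by rewrite /c; split; lra.
  have hR := He (x + c); have hL := He (x - c).
  rewrite addrAC subrr add0r gtr0_norm // (HR (x + c)) in hR; last by apply/andP; split; lra.
  rewrite addrAC subrr add0r normrN gtr0_norm // (HL (x - c)) in hL;
    last by apply/andP; split; lra.
  have {}hR := hR ltac:(lra); have {}hL := hL ltac:(lra).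
  by apply/andP; split; [apply/negP => dLt | apply/idPn => dRf];
    move: hL hR; rewrite /signed ?dLt ?(negbTE dRf); lra.
exists d; split => // z; rewrite ltr_norml => /andP[z1 z2].
have [zx|xz] := leP z x.
  by rewrite (HL z) /signed ?nL; [lra | apply/andP; split; lra].
by rewrite (HR z) /signed ?HdR; [lra | apply/andP; split; lra].
Qed.

Lemma side_slopes_opp h x dL dR : side_slopes h x dL dR ->
  side_slopes (fun z => - h z) x (~~ dL) (~~ dR).
Proof.
move=> [d d0 [HL HR]]; exists d => //.
by split => z zi; rewrite ?(HL z zi) ?(HR z zi) /signed; [case: (dL) | case: (dR)] => /=; ring.
Qed.

Lemma local_max_opp h x : is_local_max h x <-> is_local_min (fun z => - h z) x.
Proof. by split => -[d [d0 H]]; exists d; split => // z /H; rewrite lerN2. Qed.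

Lemma side_slopes_local_max h x dL dR :
  side_slopes h x dL dR -> is_local_max h x <-> dL && ~~ dR.
Proof.
move=> /side_slopes_opp/side_slopes_local_min S; rewrite negbK in S.
by split => [/local_max_opp/S|/S/local_max_opp].
Qed.

Definition valley_at (u : nat -> bool) k := ~~ u k.-1 && u k.
Definition peak_at (u : nat -> bool) k := u k.-1 && ~~ u k.

Definition pl_valley h t n x :=
  exists k, [/\ (0 < k < n)%N, x = t k & valley_at (rising h t) k].
Definition pl_peak h t n x :=
  exists k, [/\ (0 < k < n)%N, x = t k & peak_at (rising h t) k].

Section PLSlopes.
Variables (h : R -> R) (t : nat -> R) (n : nat).
Hypothesis HP : pl_breaks h t n.

Lemma pl_slopes_inside i x : (i < n)%N -> t i < x < t i.+1 ->
  side_slopes h x (rising h t i) (rising h t i).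
Proof.
move=> iN /andP[x1 x2]; have E := pl_segment HP iN.
have [m1 m2] : Num.min (x - t i) (t i.+1 - x) <= x - t i /\
  Num.min (x - t i) (t i.+1 - x) <= t i.+1 - x by rewrite !ge_min !lexx orbT.
exists (Num.min (x - t i) (t i.+1 - x)); first by rewrite lt_min !subr_gt0 x1 x2.
split => z /andP[z1 z2];
  (rewrite (E z); last by apply/andP; split; lra);
  (rewrite (E x); last by apply/andP; split; lra);
  by rewrite /signed; case: rising; lra.
Qed.

Lemma pl_slopes_break k : (0 < k < n)%N ->
  side_slopes h (t k) (rising h t k.-1) (rising h t k).
Proof.
case: k => // k /andP[_ kn]; have kn' : (k < n)%N by lia.
have [I1 I2] := (pl_increasing HP kn', pl_increasing HP kn).
have [E1 E2] := (pl_segment HP kn', pl_segment HP kn).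
have [m1 m2] : Num.min (t k.+1 - t k) (t k.+2 - t k.+1) <= t k.+1 - t k /\
  Num.min (t k.+1 - t k) (t k.+2 - t k.+1) <= t k.+2 - t k.+1
  by rewrite !ge_min !lexx orbT.
exists (Num.min (t k.+1 - t k) (t k.+2 - t k.+1)); first by rewrite lt_min !subr_gt0 I1 I2.
split => z /andP[z1 z2] /=.
  rewrite (E1 z); last by apply/andP; split; lra.
  rewrite (E1 (t k.+1)); last by apply/andP; split; lra.
  by rewrite /signed; case: rising; lra.
rewrite (E2 z); last by apply/andP; split; lra.
by rewrite /signed; case: rising; lra.
Qed.

Lemma pl_slopes_first x : x <= t 0 -> side_slopes h x false false.
Proof.
move=> x0; have I0 := pl_increasing HP (pl_size_gt0 HP).
have E z : z <= t 1 -> h z = h (t 0) - (z - t 0).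
  move=> z1; have [zt|tz] := leP z (t 0); first by rewrite (pl_left_tail HP).
  rewrite (pl_segment HP (pl_size_gt0 HP)) /signed ?(negbTE (pl_first_falls HP)) //.
  by apply/andP; split; lra.
exists (t 1 - x); first lra.
by split => z /andP[z1 z2]; rewrite /= (E z) ?(E x); lra.
Qed.

Lemma pl_slopes_last x : t n <= x -> side_slopes h x true true.
Proof.
move=> xn; have n1 : n.-1.+1 = n by rewrite prednK // (pl_size_gt0 HP).
have n1n : (n.-1 < n)%N by lia.
have In := pl_increasing HP n1n; rewrite n1 in In.
have E z : t n.-1 <= z -> h z = h (t n) + (z - t n).
  have [zt|tz] := leP (t n) z; first by rewrite (pl_right_tail HP).
  move=> z1; have Es := pl_segment HP n1n; have up := pl_last_rises HP.
  rewrite /signed /rising n1 in Es up; rewrite up in Es.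
  rewrite (Es z); last by apply/andP; split; lra.
  by rewrite (Es (t n)); [lra | apply/andP; split; lra].
exists (x - t n.-1); first lra.
by split => z /andP[z1 z2]; rewrite /= (E z) ?(E x); lra.
Qed.

Lemma pl_slopes_cases x :
  (exists2 k, (0 < k < n)%N & x = t k) \/
  ((forall k, (0 < k < n)%N -> x != t k) /\ exists d, side_slopes h x d d).
Proof.
have I := pl_increasing HP.
have [x0|x0] := leP x (t 0).
  right; split; last by exists false; exact: pl_slopes_first.
  move=> k /andP[k0 kn]; apply/eqP => xk.
  by have := increasing_lt I k0 (ltnW kn); lra.
have [xn|xn] := leP (t n) x.
  right; split; last by exists true; exact: pl_slopes_last.
  move=> k /andP[k0 kn]; apply/eqP => xk.
  by have := increasing_lt I kn (leqnn n); lra.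
have [i [iN ti1 ti2]] := increasing_locate I (ltW x0) xn.
have [xi|xi] := eqVneq x (t i).
  left; exists i => //; rewrite iN andbT lt0n.
  by apply/eqP => i0; move: xi x0; rewrite i0 => ->; rewrite ltxx.
have {}ti1 : t i < x by rewrite lt_neqAle eq_sym xi ti1.
right; split; last by exists (rising h t i); apply: pl_slopes_inside; rewrite ?ti1.
move=> k /andP[_ kn]; apply/eqP => xk.
have [ki|ik] := leqP k i.
  by have := increasing_le I ki (ltnW iN); lra.
by have := increasing_le I ik (ltnW kn); lra.
Qed.

Lemma pl_breaks_inj k k' : (0 < k < n)%N -> (0 < k' < n)%N -> t k = t k' -> k = k'.
Proof.
move=> /andP[_ kn] /andP[_ kn'] /eqP.
by rewrite (increasing_eq (pl_increasing HP)) ?(ltnW kn) ?(ltnW kn') // => /eqP.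
Qed.

Lemma pl_local_min x : is_local_min h x <-> pl_valley h t n x.
Proof.
case: (pl_slopes_cases x) => [[k kn ->]|[nk [d /side_slopes_local_min S]]].
  have S := side_slopes_local_min (pl_slopes_break kn).
  split => [/S|[k' [kn' E ?]]]; first by exists k.
  by have kk := pl_breaks_inj kn kn' E; subst k'; apply/S.
split => [/S|[k [kn E _]]]; first by rewrite andNb.
by move: (nk k kn); rewrite E eqxx.
Qed.

Lemma pl_local_max x : is_local_max h x <-> pl_peak h t n x.
Proof.
case: (pl_slopes_cases x) => [[k kn ->]|[nk [d /side_slopes_local_max S]]].
  have S := side_slopes_local_max (pl_slopes_break kn).
  split => [/S|[k' [kn' E ?]]]; first by exists k.
  by have kk := pl_breaks_inj kn kn' E; subst k'; apply/S.
split => [/S|[k [kn E _]]]; first by rewrite andbN.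
by move: (nk k kn); rewrite E eqxx.
Qed.

End PLSlopes.

End Breakpoints.

Section Residues.
Variable R : realType.
Implicit Types (h : R -> R) (t : nat -> R) (xs ys : seq R).

(* Each [a j], [k < j < m], occurs with exponent [u j.-1 - u j]. *)
Lemma prod_ratio_telescope (a : nat -> R) (u : nat -> bool) k m :
  ~~ u k -> (k < m)%N -> (forall j, (k < j < m)%N -> a j != 0) ->
  \prod_(k <= i < m) (if u i then a i.+1 / a i else 1) =
  (if u m.-1 then a m else 1) * (\prod_(k.+1 <= j < m | peak_at u j) a j) /
    \prod_(k.+1 <= j < m | valley_at u j) a j.
Proof.
move=> uk; elim: m => // m IH /[1!ltnS] km Ha.
case: (ltngtP k m) km => // [km _|<- _]; last first.
  by rewrite big_nat1 !big_geq //= (negbTE uk) !(mul1r, invr1, mulr1).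
have recr P : \prod_(k.+1 <= j < m.+1 | P j) a j =
    (\prod_(k.+1 <= j < m | P j) a j) * (if P m then a m else 1).
  by rewrite big_mkcond big_nat_recr // -big_mkcond.
rewrite big_nat_recr ?(ltnW km) //= IH // => [|j ?]; last by apply: Ha; lia.
rewrite !recr.
have am : a m != 0 by apply: Ha; lia.
have N0 : \prod_(k.+1 <= j < m | valley_at u j) a j != 0.
  rewrite prodf_seq_neq0; apply/allP => j; rewrite mem_index_iota => jr.
  by apply/implyP => _; apply: Ha; lia.
move: N0 am; rewrite /peak_at /valley_at.
by case: (u m.-1); case: (u m) => /= N0 am; field; rewrite ?N0 ?am.
Qed.

Definition residue xs ys (x : R) :=
  (\prod_(y <- ys) (x - y)) / \prod_(x' <- xs | x' != x) (x - x').

Lemma zigzag_weight_residue xs ys i : uniq xs -> (i < size xs)%N ->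
  zigzag_weight xs ys i = residue xs ys xs`_i.
Proof.
move=> U iS; rewrite /zigzag_weight /residue; congr (_ / _).
by rewrite (big_nth 0) big_mkord; apply: eq_bigl => j /=; rewrite nth_uniq.
Qed.

Lemma transition_integral_residue xs ys (phi : R -> R) : uniq xs ->
  transition_integral xs ys phi = \sum_(x <- xs) residue xs ys x * phi x.
Proof.
move=> U; rewrite /transition_integral [RHS](big_nth 0) big_mkord.
by apply: eq_bigr => i _; rewrite zigzag_weight_residue.
Qed.

Lemma perm_eq_break_points t n (P : pred nat) (s : seq R) :
  increasing_upto t n -> uniq s ->
  (forall x, x \in s <-> exists k, [/\ (0 < k < n)%N, x = t k & P k]) ->
  perm_eq s [seq t j | j <- index_iota 1 n & P j].
Proof.
move=> I U Hs; apply: uniq_perm => //.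
  rewrite map_inj_in_uniq ?filter_uniq ?iota_uniq // => i j.
  rewrite !mem_filter !mem_index_iota => /andP[_ /andP[_ iN]] /andP[_ /andP[_ jN]] /eqP.
  by rewrite (increasing_eq I) => [/eqP||]; lia.
move=> x; apply/idP/mapP => [/Hs[k [kn -> Pk]]|[j]].
  by exists k; rewrite // mem_filter Pk mem_index_iota.
by rewrite mem_filter mem_index_iota => /andP[Pj jn] ->; apply/Hs; exists j.
Qed.

Definition rise_factor h t (x : R) j m :=
  \prod_(j <= i < m) (if rising h t i then (x - t i.+1) / (x - t i) else 1).

Definition fall_factor h t (x : R) j m :=
  \prod_(j <= i < m) (if rising h t i then 1 else (x - t i) / (x - t i.+1)).

Definition extrema_of h xs ys := [/\ uniq xs, uniq ys,
  forall x, x \in xs <-> is_local_min h x & forall y, y \in ys <-> is_local_max h y].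

Section ValleyResidue.
Variables (h : R -> R) (t : nat -> R) (n k : nat).
Hypothesis HP : pl_breaks h t n.
Hypothesis kn : (0 < k < n)%N.
Hypothesis vk : valley_at (rising h t) k.
Let u := rising h t.

Let gap_neq0 j : (j <= n)%N -> j != k -> t k - t j != 0.
Proof.
by move=> jn jk; rewrite subr_eq0 eq_sym (increasing_eq (pl_increasing HP)) //; lia.
Qed.

Lemma pl_rise_factor_valley : rise_factor h t (t k) 0 k =
  \prod_(1 <= j < k | peak_at u j) (t k - t j) / \prod_(1 <= j < k | valley_at u j) (t k - t j).
Proof.
rewrite /rise_factor (prod_ratio_telescope (a := fun j => t k - t j)) /=.
- by case/andP: vk => /negbTE; rewrite -/u => ->; rewrite mul1r.
- exact: pl_first_falls HP.
- by lia.
- by move=> j jk; apply: gap_neq0; lia.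
Qed.

Lemma pl_fall_factor_valley : fall_factor h t (t k) k n =
  \prod_(k.+1 <= j < n | peak_at u j) (t k - t j) /
    \prod_(k.+1 <= j < n | valley_at u j) (t k - t j).
Proof.
have -> : fall_factor h t (t k) k n =
    (\prod_(k <= i < n) (if ~~ u i then (t k - t i.+1) / (t k - t i) else 1))^-1.
  rewrite /fall_factor -prodfV; apply: eq_bigr => i _.
  by rewrite -/u; case: (u i); rewrite /= ?invr1 ?invf_div.
rewrite (prod_ratio_telescope (a := fun j => t k - t j)) /=; first last.
- by move=> j jk; apply: gap_neq0; lia.
- by lia.
- by rewrite negbK; case/andP: vk.
have := pl_last_rises HP; rewrite -/u => ->; rewrite mul1r invf_div.
by congr (_ / _); apply: eq_bigl => j; rewrite /peak_at /valley_at negbK.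
Qed.

Lemma pl_residue_prod xs ys : extrema_of h xs ys -> residue xs ys (t k) =
  (\prod_(1 <= j < k | peak_at u j) (t k - t j) *
   \prod_(k.+1 <= j < n | peak_at u j) (t k - t j)) /
  (\prod_(1 <= j < k | valley_at u j) (t k - t j) *
   \prod_(k.+1 <= j < n | valley_at u j) (t k - t j)).
Proof.
case=> Ux Uy Hx Hy; have I := pl_increasing HP.
have Px : perm_eq xs [seq t j | j <- index_iota 1 n & valley_at u j].
  by apply: perm_eq_break_points => // x; split => [/Hx/(pl_local_min HP)|/(pl_local_min HP)/Hx].
have Py : perm_eq ys [seq t j | j <- index_iota 1 n & peak_at u j].
  by apply: perm_eq_break_points => // y; split => [/Hy/(pl_local_max HP)|/(pl_local_max HP)/Hy].
have [kn' uk] : (k < n)%N /\ u k by case/andP: vk; split => //; lia.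
rewrite /residue (perm_big _ Py) (perm_big _ Px) !big_map !big_filter big_filter_cond.
rewrite [X in X / _](big_cat_nat (n := k)) 1?[X in _ / X](big_cat_nat (n := k)) /=; try lia.
rewrite !(big_ltn_cond kn') /peak_at /valley_at uk andbF eqxx !andbF.
have drop_k m p : (p <= n)%N -> (p <= k)%N || (k < m)%N ->
    \prod_(j <- index_iota m p | valley_at u j && (t j != t k)) (t k - t j) =
    \prod_(m <= j < p | valley_at u j) (t k - t j).
  move=> pn mpk; rewrite big_seq_cond [RHS]big_seq_cond; apply: eq_bigl => j.
  case: (boolP (j \in index_iota m p)) => //=; rewrite mem_index_iota => jr.
  have jk : j != k by lia.
  by rewrite (increasing_eq I) ?jk ?andbT //; lia.
by rewrite !drop_k; try lia.
Qed.

End ValleyResidue.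

Lemma pl_residue h t n xs ys k : pl_breaks h t n -> extrema_of h xs ys ->
  (0 < k < n)%N -> valley_at (rising h t) k ->
  residue xs ys (t k) = rise_factor h t (t k) 0 k * fall_factor h t (t k) k n.
Proof.
move=> HP E kn vk.
by rewrite (pl_residue_prod HP kn vk E) (pl_rise_factor_valley HP kn vk)
  (pl_fall_factor_valley HP kn vk) mulf_div.
Qed.

Lemma rise_factor_ge0 h t (x : R) j m : (forall i, (j <= i <= m)%N -> t i <= x) ->
  0 <= rise_factor h t x j m.
Proof.
move=> tx; rewrite /rise_factor big_seq; apply: prodr_ge0 => i.
rewrite mem_index_iota => /andP[ji im]; case: ifP => // _.
by apply: divr_ge0; rewrite subr_ge0 tx //; lia.
Qed.

Lemma fall_factor_ge0 h t (x : R) j m : (forall i, (j <= i <= m)%N -> x <= t i) ->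
  0 <= fall_factor h t x j m.
Proof.
move=> xt; rewrite /fall_factor big_seq; apply: prodr_ge0 => i.
rewrite mem_index_iota => /andP[ji im]; case: ifP => // _.
by apply: mulr_le0; rewrite ?invr_le0 subr_le0 xt //; lia.
Qed.

Lemma pl_residue_ge0 h t n xs ys x : pl_breaks h t n -> extrema_of h xs ys ->
  x \in xs -> 0 <= residue xs ys x.
Proof.
move=> HP E; case: (E) => _ _ Hx _ /Hx/(pl_local_min HP) [k [kn -> vk]].
have I := pl_increasing HP.
rewrite (pl_residue HP) //; apply: mulr_ge0.
  by apply: rise_factor_ge0 => i ik; apply: (increasing_le I); lia.
by apply: fall_factor_ge0 => i ik; apply: (increasing_le I); lia.
Qed.

End Residues.

Section LogSums.
Variable R : realType.

Lemma lnB_le (a b : R) : 0 < a -> 0 < b -> ln a - ln b <= (a - b) / b.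
Proof.
move=> a0 b0; rewrite -ln_div ?posrE //.
have ab0 : 0 < a / b by rewrite divr_gt0.
have -> : (a - b) / b = a / b - 1 by rewrite mulrBl divff ?lt0r_neq0.
have := @le_ln1Dx _ (a / b - 1).
have -> : 1 + (a / b - 1) = a / b by ring.
by apply; lra.
Qed.

Lemma ln_chord_le (a b c x : R) : a < b -> b < c -> c < x ->
  (ln (x - a) - ln (x - b)) / (b - a) <= (ln (x - b) - ln (x - c)) / (c - b).
Proof.
move=> ab bc cx; apply: (@le_trans _ _ (1 / (x - b))).
  rewrite ler_pdivrMr ?subr_gt0 // mul1r mulrC.
  have := @lnB_le (x - a) (x - b).
  have -> : x - a - (x - b) = b - a by ring.
  by apply; lra.
rewrite ler_pdivlMr ?subr_gt0 // mul1r mulrC.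
have := @lnB_le (x - c) (x - b) ltac:(lra) ltac:(lra).
have -> : x - c - (x - b) = - (c - b) by ring.
rewrite mulNr; lra.
Qed.

Lemma sum_mul_tail_le (c r : nat -> R) m :
  (forall j, (j <= m)%N -> \sum_(j <= i < m) c i <= 0) ->
  (forall i, (i.+1 < m)%N -> r i <= r i.+1) ->
  forall j, (j <= m)%N -> \sum_(j <= i < m) c i * r i <= r j * \sum_(j <= i < m) c i.
Proof.
move=> Hc Hr j; elim: {j}(m - j)%N {-2}j (erefl (m - j)%N) => [|d IH] j dE jm.
  have -> : j = m by lia.
  by rewrite !big_geq // mulr0.
have jm' : (j < m)%N by lia.
have := IH j.+1 ltac:(lia) jm'; rewrite !(big_ltn jm').
have [jm2|jm2] := ltnP j.+1 m.
  have := ler_wnM2r (Hc j.+1 jm') (Hr j jm2); lra.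
by rewrite !big_geq // mulr0 !addr0 mulrC.
Qed.

Lemma sum_from_telescope (f : nat -> R) j m' m : (j <= m)%N -> (m' <= m)%N ->
  \sum_(j <= i < m) (m' <= i)%:R * (f i.+1 - f i) = f m - f (maxn m' j).
Proof.
move=> jm m'm; rewrite (big_cat_nat (n := maxn m' j)) /=; try lia.
rewrite big1_seq ?add0r => [|i /andP[_]]; last first.
  rewrite mem_index_iota => ir; have -> : (m' <= i)%N = false by lia.
  by rewrite mul0r.
rewrite -telescope_sumr; last lia.
apply: eq_big_nat => i ir; have -> : (m' <= i)%N by lia.
by rewrite mul1r.
Qed.

End LogSums.

Section RiseFactorComparison.
Variable R : realType.

Lemma ln_prod_pos (I : eqType) (r : seq I) (F : I -> R) : (forall i, i \in r -> 0 < F i) ->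
  0 < \prod_(i <- r) F i /\ ln (\prod_(i <- r) F i) = \sum_(i <- r) ln (F i).
Proof.
elim: r => [|a r IH] H; first by rewrite !big_nil ln1.
have [P L] := IH (fun i ir => H i (mem_behead (s := a :: r) ir)).
have Fa := H a (mem_head a r).
by rewrite !big_cons lnM ?posrE ?L // mulr_gt0.
Qed.

Lemma rising_length_sum (h : R -> R) t j m : (j <= m)%N ->
  (forall i, (j <= i < m)%N -> h (t i.+1) = h (t i) + signed (rising h t i) (t i.+1 - t i)) ->
  \sum_(j <= i < m) (rising h t i)%:R * (t i.+1 - t i) = (h (t m) + t m - (h (t j) + t j)) / 2.
Proof.
move=> jm Hs; rewrite mulrBl -(telescope_sumr (fun k => (h (t k) + t k) / 2) jm).
apply: eq_big_nat => i ir; rewrite Hs // /signed.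
by case: rising => /=; field.
Qed.

Variables (t : nat -> R) (hW hB : R -> R) (x eps : R) (m m' : nat).
Hypothesis t_incr : increasing_upto t m.
Hypothesis t_lt_x : t m < x.
Hypothesis m'_le_m : (m' <= m)%N.
Hypothesis t_m' : t m' = t m - eps.
Hypothesis hW_seg : forall i, (i < m)%N ->
  hW (t i.+1) = hW (t i) + signed (rising hW t i) (t i.+1 - t i).
Hypothesis hB_seg : forall i, (i < m)%N ->
  hB (t i.+1) = hB (t i) + signed (rising hB t i) (t i.+1 - t i).
Hypothesis hB_end : hB (t m) = hW (t m) + eps.
Hypothesis hB_low : forall j, (j <= m)%N -> hW (t j) - eps <= hB (t j).

Let g i := ln (x - t i) - ln (x - t i.+1).
Let l i := t i.+1 - t i.
Let c i := ((rising hB t i)%:R - (rising hW t i)%:R - (m' <= i)%:R) * l i.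

Let gap_gt0 i : (i <= m)%N -> 0 < x - t i.
Proof. by move=> im; have := increasing_le t_incr im (leqnn m); have := t_lt_x; lra. Qed.

Let l_gt0 i : (i < m)%N -> 0 < l i.
Proof. by move=> im; have := t_incr im; rewrite /l; lra. Qed.

Let ln_rise_factor h : 0 < rise_factor h t x 0 m /\
  ln (rise_factor h t x 0 m) = - \sum_(0 <= i < m) (rising h t i)%:R * g i.
Proof.
have [|P L] := ln_prod_pos (r := index_iota 0 m)
  (F := fun i => if rising h t i then (x - t i.+1) / (x - t i) else 1).
  move=> i; rewrite mem_index_iota => ir; case: ifP => // _.
  by rewrite divr_gt0 ?gap_gt0 //; lia.
split => //; rewrite L -sumrN; apply: eq_big_seq => i; rewrite mem_index_iota => ir.
case: rising => /=; last by rewrite ln1 mul0r oppr0.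
by rewrite ln_div ?posrE ?gap_gt0 1?mul1r /g ?opprB //; lia.
Qed.

Let ratio_monotone i : (i.+1 < m)%N -> g i / l i <= g i.+1 / l i.+1.
Proof.
move=> im; apply: ln_chord_le; try by apply: t_incr; lia.
by have := increasing_le t_incr im (leqnn m); have := t_lt_x; lra.
Qed.

Let tail_sum_le j : (j <= m)%N -> \sum_(j <= i < m) c i <= 0.
Proof.
move=> jm.
have -> : \sum_(j <= i < m) c i = \sum_(j <= i < m) (rising hB t i)%:R * l i -
    \sum_(j <= i < m) (rising hW t i)%:R * l i - \sum_(j <= i < m) (m' <= i)%:R * l i.
  by rewrite -!sumrB; apply: eq_bigr => i _; rewrite /c !mulrBl.
have SB := rising_length_sum jm (fun i ir => hB_seg (i := i) ltac:(lia)).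
have SW := rising_length_sum jm (fun i ir => hW_seg (i := i) ltac:(lia)).
have SM := sum_from_telescope t jm m'_le_m.
have Bl : \sum_(j <= i < m) (rising hB t i)%:R * l i <= t m - t j.
  rewrite -telescope_sumr //; apply: ler_sum_nat => i /andP[_ im].
  by have := l_gt0 im; case: rising => /=; rewrite /l; lra.
have Wl : 0 <= \sum_(j <= i < m) (rising hW t i)%:R * l i.
  rewrite big_seq; apply: sumr_ge0 => i; rewrite mem_index_iota => /andP[_ im].
  by apply: mulr_ge0; rewrite ?ler0n ?ltW ?l_gt0.
rewrite /l in SB SW Bl Wl *.
have [m'j|jm'] := leqP m' j.
  by move: SM; rewrite (maxn_idPr m'j); lra.
move: SM; rewrite (maxn_idPl (ltnW jm')) t_m'.
by have := hB_low jm; have := hB_end; lra.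
Qed.

(* In logarithms the claim is [\sum_i c i * (g i / l i) <= 0]: the tail sums of
   [c] are nonpositive and the chord slopes [g i / l i] of [- ln (x - .)] increase. *)
Lemma rise_factor_shift_le :
  rise_factor hW t x 0 m * ((x - t m) / (x + eps - t m)) <= rise_factor hB t x 0 m.
Proof.
have [PW LW] := ln_rise_factor hW; have [PB LB] := ln_rise_factor hB.
have [xm xm'] := (gap_gt0 (leqnn m), gap_gt0 m'_le_m).
have -> : x + eps - t m = x - t m' by rewrite t_m'; ring.
have q0 : 0 < (x - t m) / (x - t m') by rewrite divr_gt0.
have Wq0 := mulr_gt0 PW q0.
rewrite -ler_ln ?posrE // lnM ?posrE // ln_div ?posrE // LW LB.
have Sg : \sum_(0 <= i < m) (m' <= i)%:R * g i = ln (x - t m') - ln (x - t m).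
  rewrite (eq_bigr (fun i => (m' <= i)%:R * ((fun k => - ln (x - t k)) i.+1 - (- ln (x - t i))))).
    by rewrite sum_from_telescope // maxn0; ring.
  by move=> i _; rewrite /g; congr (_ * _); ring.
have Abel : \sum_(0 <= i < m) c i * (g i / l i) <= 0.
  have [->|m0] := posnP m; first by rewrite big_geq.
  apply: le_trans (sum_mul_tail_le tail_sum_le ratio_monotone (leq0n m)) _.
  have g0 : 0 <= g 0.
    have [a0 a1] := (gap_gt0 (leq0n m), gap_gt0 m0).
    by rewrite /g subr_ge0 ler_ln ?posrE //; have := l_gt0 m0; rewrite /l; lra.
  exact: mulr_ge0_le0 (divr_ge0 g0 (ltW (l_gt0 m0))) (tail_sum_le (leq0n m)).
have E : \sum_(0 <= i < m) c i * (g i / l i) =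
    \sum_(0 <= i < m) (rising hB t i)%:R * g i - \sum_(0 <= i < m) (rising hW t i)%:R * g i -
    \sum_(0 <= i < m) (m' <= i)%:R * g i.
  rewrite -!sumrB; apply: eq_big_nat => i /andP[_ im].
  rewrite /c /l; field.
  by rewrite subr_eq0 gt_eqF ?t_incr.
lra.
Qed.

End RiseFactorComparison.

Section SortedBreaks.
Variable R : realType.
Implicit Types (h : R -> R) (B T : seq R).

Definition affine_between h B := forall a c, a < c ->
  (forall s, s \in B -> ~ (a < s < c)) -> unit_affine_on h a c.

Lemma affine_between_sub h B B' :
  {subset B <= B'} -> affine_between h B -> affine_between h B'.
Proof. by move=> sB H a c ac Hs; apply: H => // s /sB; apply: Hs. Qed.

Lemma pl_breaks_sorted h T (Q cL cR : R) :
  0 < Q -> sorted <%R T -> affine_between h T ->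
  (forall z, z <= - Q -> h z = cL - z) -> (forall z, Q <= z -> h z = z + cR) ->
  - Q - 1 \in T -> - Q \in T -> Q \in T -> Q + 1 \in T ->
  pl_breaks h (nth 0 T) (size T).-1.
Proof.
move=> Q0 sT HT HL HR i1 i2 i3 i4.
have [n nS] : exists n, size T = n.+1 by case: (T) i1 => // y s _; exists (size s).
rewrite nS /=; set t := nth 0 T.
have lt_t j k : (j <= n)%N -> (k <= n)%N -> (t j < t k) = (j < k)%N.
  by move=> jn kn; apply: (lt_sorted_ltn_nth 0 sT); rewrite inE nS ltnS.
have le_t j k : (j <= n)%N -> (k <= n)%N -> (t j <= t k) = (j <= k)%N.
  by move=> jn kn; apply: (lt_sorted_leq_nth 0 sT); rewrite inE nS ltnS.
have idx y : y \in T -> exists2 j, (j <= n)%N & y = t j.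
  by move=> yT; exists (index y T); [rewrite -ltnS -nS index_mem | rewrite /t nth_index].
have [[j1 j1n E1] [j2 j2n E2]] := (idx _ i1, idx _ i2).
have [[j3 j3n E3] [j4 j4n E4]] := (idx _ i3, idx _ i4).
have t0 : t 0 <= - Q - 1 by rewrite E1 le_t //; lia.
have tn : Q + 1 <= t n by rewrite E4 le_t //; lia.
have n0 : (0 < n)%N by rewrite lt0n; apply/eqP => n0; move: tn t0; rewrite n0; lra.
have j2_gt0 : (0 < j2)%N.
  by rewrite lt0n; apply/eqP => j20; move: t0; rewrite j20 in E2; rewrite -E2; lra.
have j3_lt : (j3 < n)%N.
  by rewrite ltn_neqAle j3n andbT; apply/eqP => j3E; move: tn; rewrite -j3E -E3; lra.
have t1 : t 1 <= - Q by rewrite E2 le_t.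
have tn1 : Q <= t n.-1 by rewrite E3 le_t //; lia.
have I : increasing_upto t n by move=> i iN; rewrite lt_t //; lia.
have n1 : n.-1.+1 = n by lia.
split => //.
- move=> i iN; apply: HT; first exact: I.
  move=> y /idx[j jn ->]; rewrite !lt_t //; lia.
- by move=> z z0; rewrite !HL; lra.
- by move=> z z0; rewrite !HR; lra.
- by rewrite /rising -leNgt !HL; have := I 0 n0; lra.
- have := I n.-1 ltac:(lia); rewrite /rising n1 => tnn.
  by rewrite !HR; lra.
Qed.

End SortedBreaks.

Section ClampedDiagram.
Variable R : realType.

Definition clamp (lo v hi : R) := Num.min (Num.max lo v) hi.

Lemma clamp_lo lo v hi : lo <= hi -> v <= lo -> clamp lo v hi = lo.
Proof. by move=> lh vl; rewrite /clamp max_l // min_l. Qed.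

Lemma clamp_mid lo v hi : lo <= v -> v <= hi -> clamp lo v hi = v.
Proof. by move=> lv vh; rewrite /clamp max_r // min_l. Qed.

Lemma clamp_hi lo v hi : lo <= hi -> hi <= v -> clamp lo v hi = hi.
Proof.
move=> lh hv; have [vl|lv] := leP v lo; last by rewrite /clamp max_r ?ltW // min_r.
by rewrite /clamp max_l // min_r //; exact: le_trans hv vl.
Qed.

Lemma clamp_ge lo v hi : lo <= hi -> lo <= clamp lo v hi.
Proof.
move=> lh; have [vl|lv] := leP v lo; first by rewrite clamp_lo.
by have [vh|hv] := leP v hi; [rewrite clamp_mid // ltW | rewrite clamp_hi // ltW].
Qed.

Lemma clampD lo v hi z : lo <= hi -> clamp (lo + z) (v + z) (hi + z) = clamp lo v hi + z.
Proof.
move=> lh; have [vl|lv] := leP v lo; first by rewrite !clamp_lo // lerD2r.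
have [vh|hv] := leP v hi; first by rewrite !clamp_mid // ?lerD2r // ltW.
by rewrite !clamp_hi // ?lerD2r // ltW.
Qed.

Lemma seq_least_ge (s : seq R) (b : R) : (exists2 y, y \in s & b <= y) ->
  exists e, [/\ e \in s, b <= e & forall y, y \in s -> b <= y -> e <= y].
Proof.
move=> [y ys by_]; set s' := [seq z <- s | b <= z].
have : perm_eq (sort <=%R s') s' by rewrite perm_sort.
have := sort_sorted le_total s'.
case: (sort _ s') => [_ /perm_mem/(_ y)|e r /(order_path_min le_trans)/allP He /perm_mem Hs].
  by rewrite mem_filter by_ ys.
have := Hs e; rewrite inE eqxx mem_filter => /esym/andP[be es].
exists e; split => // w ws bw; have := Hs w; rewrite inE mem_filter bw ws.
by case/orP => [/eqP->|/He].
Qed.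

Variables (W : R -> R) (eps b : R).
Hypothesis eps_gt0 : 0 < eps.

Let V z := clamp (W z - eps) (z + b) (W z + eps).

Lemma clamp_affine_rising a c : (forall z, a <= z <= c -> W z = W a + (z - a)) ->
  forall z, a <= z <= c -> V z = V a + (z - a).
Proof.
move=> Wr z zi; have ai : a <= a <= c by case/andP: zi => z1 z2; apply/andP; split; lra.
have E y : a <= y <= c -> V y = clamp (W a - a - eps) b (W a - a + eps) + y.
  move=> yi; rewrite /V Wr // -clampD; last by have := eps_gt0; lra.
  by congr clamp; ring.
by rewrite !E //; ring.
Qed.

Lemma clamp_affine_falling a c K : (forall z, a <= z <= c -> W z = K - z) ->
  ~ (a < (K - b - eps) / 2 < c) -> ~ (a < (K - b + eps) / 2 < c) -> unit_affine_on V a c.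
Proof.
move=> Wf c1n c2n; have e0 := eps_gt0.
set c1 := (K - b - eps) / 2 in c1n; set c2 := (K - b + eps) / 2 in c2n.
have c12 : c1 < c2 by rewrite /c1 /c2; lra.
have V1 z : a <= z <= c -> z <= c1 -> V z = K - z - eps.
  by move=> zi zc; rewrite /V Wf //; apply: clamp_lo; rewrite /c1 in zc; lra.
have V2 z : a <= z <= c -> c1 <= z <= c2 -> V z = z + b.
  move=> zi /andP[z1 z2]; rewrite /V Wf //.
  by apply: clamp_mid; rewrite /c1 /c2 in z1 z2; lra.
have V3 z : a <= z <= c -> c2 <= z -> V z = K - z + eps.
  by move=> zi zc; rewrite /V Wf //; apply: clamp_hi; rewrite /c2 in zc; lra.
have [ac|ca] := leP a c; last by left => z /andP[z1 z2]; lra.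
have aa : a <= a <= c by rewrite lexx ac.
have [cc1|c1c] := leP c c1.
  by right => z /andP[z1 z2]; rewrite V1 ?V1 ?z1 ?z2 //; [ring | lra..].
have c1a : c1 <= a by rewrite leNgt; apply/negP => ac1; apply: c1n; rewrite ac1.
have [cc2|c2c] := leP c c2.
  by left => z /andP[z1 z2]; rewrite V2 ?V2 ?z1 ?z2 //; [ring | apply/andP; split; lra..].
have c2a : c2 <= a by rewrite leNgt; apply/negP => ac2; apply: c2n; rewrite ac2.
by right => z /andP[z1 z2]; rewrite V3 ?V3 ?z1 ?z2 //; [ring | lra..].
Qed.

Lemma falling_anchor B Q a c K : affine_between W B -> Q \in B ->
  (forall z, Q <= z -> W z = z - eps) -> a < c -> (forall s, s \in B -> ~ (a < s < c)) ->
  (forall z, a <= z <= c -> W z = K - z) -> exists2 p, p \in B & W p + p = K.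
Proof.
move=> HW QB WQ ac Bac Wf; have e0 := eps_gt0.
have cin : a <= c <= c by rewrite lexx ltW.
have ain : a <= a <= c by rewrite lexx ltW.
have [e [eB ce emin]] : exists e, [/\ e \in B, c <= e & forall y, y \in B -> c <= y -> e <= y].
  apply: seq_least_ge; have [cQ|Qc] := leP c Q; first by exists Q.
  have Qa : Q <= a by rewrite leNgt; apply/negP => aQ; apply: (Bac Q QB); rewrite aQ.
  by have := Wf c cin; have := Wf a ain; rewrite !WQ //; lra.
exists e => //.
have Bae s : s \in B -> ~ (a < s < e).
  move=> sB /andP[a_s se]; have [sc|cs] := ltP s c; first by apply: (Bac s sB); rewrite a_s.
  by have := emin s sB cs; lra.
have ci : a <= c <= e by rewrite ltW.
have ei : a <= e <= e by rewrite lexx andbT; lra.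
case: (HW a e ltac:(lra) Bae) => He.
  by have := He c ci; have := Wf c cin; have := Wf a ain; lra.
by rewrite He // (Wf a ain); ring.
Qed.

(* On a falling segment of [W], [W z + z] is a constant [W p + p] with [p] in
   [B] (falling_anchor), and [z + b] crosses [W z -+ eps] at these points. *)
Definition clamp_breaks B := B ++ [seq (W p + p - b - eps) / 2 | p <- B] ++
  [seq (W p + p - b + eps) / 2 | p <- B].

Lemma affine_between_clamp B Q : affine_between W B -> Q \in B ->
  (forall z, Q <= z -> W z = z - eps) -> affine_between V (clamp_breaks B).
Proof.
move=> HW QB WQ a c ac Hs.
have HB s : s \in B -> ~ (a < s < c) by move=> sB; apply: Hs; rewrite mem_cat sB.
case: (HW a c ac HB) => [Wr|Wf]; first by left; apply: clamp_affine_rising.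
have Wf' z : a <= z <= c -> W z = (W a + a) - z by move=> zi; rewrite Wf //; ring.
have [p pB Wp] := falling_anchor HW QB WQ ac HB Wf'.
apply: clamp_affine_falling Wf' _ _; rewrite -Wp; apply: Hs;
  rewrite /clamp_breaks !mem_cat; apply/orP; right; apply/orP; [left|right];
  by apply/mapP; exists p.
Qed.

End ClampedDiagram.

Section Translation.
Variable R : realType.
Implicit Types (h : R -> R) (xs ys : seq R).

Lemma local_min_shift h e y :
  is_local_min (fun z => h (z - e)) y <-> is_local_min h (y - e).
Proof.
split => -[d [d0 H]]; exists d; split => // z zd.
  by have := H (z + e); rewrite addrK; apply; rewrite (_ : z + e - y = z - (y - e)) //; ring.
by apply: H; rewrite (_ : z - e - (y - e) = z - y) //; ring.
Qed.

Lemma local_max_shift h e y :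
  is_local_max (fun z => h (z - e)) y <-> is_local_max h (y - e).
Proof.
split => [/local_max_opp/local_min_shift/local_max_opp //|].
by move=> /local_max_opp/(local_min_shift (fun z => - h z))/local_max_opp.
Qed.

Lemma mem_map_addr xs e y : (y \in map (fun x => x + e) xs) = (y - e \in xs).
Proof. by rewrite -{1}(subrK e y) (mem_map (@addIr _ e)). Qed.

Lemma extrema_of_shift h xs ys e : extrema_of h xs ys ->
  extrema_of (fun z => h (z - e)) (map (fun x => x + e) xs) (map (fun x => x + e) ys).
Proof.
case=> Ux Uy Hx Hy; split; rewrite ?map_inj_uniq //; try exact: addIr.
  by move=> x; rewrite mem_map_addr local_min_shift.
by move=> y; rewrite mem_map_addr local_max_shift.
Qed.

Lemma residue_shift xs ys e x :
  residue (map (fun x => x + e) xs) (map (fun x => x + e) ys) (x + e) = residue xs ys x.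
Proof.
rewrite /residue !big_map; congr (_ / _); first by apply: eq_bigr => y _; ring.
by apply: eq_big => [y|y _]; [rewrite (inj_eq (@addIr _ e)) | ring].
Qed.

Lemma affine_between_shift h B e : affine_between h B ->
  affine_between (fun z => h (z - e)) (map (fun x => x + e) B).
Proof.
move=> HB a c ac Hs.
have Hs' s : s \in B -> ~ (a - e < s < c - e).
  move=> sB /andP[s1 s2]; apply: (Hs (s + e)); first exact: map_f.
  by apply/andP; split; lra.
have sub z : a <= z <= c -> a - e <= z - e <= c - e.
  by case/andP => z1 z2; apply/andP; split; lra.
case: (HB (a - e) (c - e) ltac:(lra) Hs') => H; [left|right] => z /sub zi; rewrite H //; ring.
Qed.

Lemma sum_le_subset (s1 s2 : seq R) (F : R -> R) : uniq s1 -> uniq s2 ->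
  {subset s1 <= s2} -> (forall y, y \in s2 -> 0 <= F y) ->
  \sum_(y <- s1) F y <= \sum_(y <- s2) F y.
Proof.
move=> U1 U2 sub F0; have P : perm_eq s1 [seq y <- s2 | y \in s1].
  apply: uniq_perm; rewrite ?filter_uniq // => y.
  by rewrite mem_filter; apply/idP/andP => [ys|[]//]; split => //; apply: sub.
rewrite (perm_big _ P) big_filter big_mkcond [X in _ <= X]big_seq [X in X <= _]big_seq.
by apply: ler_sum => y ys; case: ifP => _ //; exact: F0.
Qed.

Lemma sum_le_dominated (s1 s2 : seq R) (F G : R -> R) : uniq s1 -> uniq s2 ->
  (forall y, y \in s2 -> 0 <= G y) ->
  (forall y, y \in s1 -> F y <= 0 \/ y \in s2 /\ F y <= G y) ->
  \sum_(y <- s1) F y <= \sum_(y <- s2) G y.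
Proof.
move=> U1 U2 G0 FG; apply: (@le_trans _ _ (\sum_(y <- s1 | y \in s2) G y)).
  rewrite [X in _ <= X]big_mkcond /= big_seq [X in _ <= X]big_seq.
  apply: ler_sum => y ys1.
  case: ifP => ys2; case: (FG y ys1) => [Fy|[ys2' FGy]] //.
    exact: le_trans Fy (G0 y ys2).
  by rewrite ys2 in ys2'.
rewrite -big_filter; apply: sum_le_subset; rewrite ?filter_uniq // => y.
by rewrite mem_filter => /andP[].
Qed.

End Translation.

Section ResidueComparison.
Variable R : realType.
Implicit Types (h : R -> R) (t : nat -> R).

Lemma rise_factor_cat h t (x : R) j m p : (j <= m <= p)%N ->
  rise_factor h t x j p = rise_factor h t x j m * rise_factor h t x m p.
Proof. by case/andP=> jm mp; rewrite /rise_factor (big_cat_nat jm mp). Qed.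

Lemma residue_le_past_cross hW hB t n xsW ysW xsB ysB (eps : R) m m' k :
  pl_breaks hW t n -> pl_breaks hB t n ->
  extrema_of hW xsW ysW -> extrema_of hB xsB ysB ->
  (m' <= m)%N -> (m < k < n)%N -> t m' = t m - eps ->
  (forall z, t m <= z -> hB z = hW z + eps) -> (forall z, hW z - eps <= hB z) ->
  valley_at (rising hW t) k ->
  t k \in xsB /\
  residue xsW ysW (t k) * ((t k - t m) / (t k + eps - t m)) <= residue xsB ysB (t k).
Proof.
move=> PW PB EW EB m'm /andP[mk kn] tm' Bpast Blow vk.
have I := pl_increasing PW; have kn' : (0 < k < n)%N by lia.
have same_rise i : (m <= i < n)%N -> rising hB t i = rising hW t i.
  move=> /andP[mi iN]; rewrite /rising !Bpast ?ltrD2r //; apply: (increasing_le I); lia.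
have vkB : valley_at (rising hB t) k by rewrite /valley_at !same_rise //; lia.
split; first by case: EB => _ _ -> _; apply/(pl_local_min PB); exists k.
rewrite (pl_residue PW EW kn' vk) (pl_residue PB EB kn' vkB).
have cut h : rise_factor h t (t k) 0 k = rise_factor h t (t k) 0 m * rise_factor h t (t k) m k.
  by apply: rise_factor_cat; lia.
rewrite !cut.
have -> : rise_factor hB t (t k) m k = rise_factor hW t (t k) m k.
  by apply: eq_big_nat => i ir; rewrite same_rise //; lia.
have -> : fall_factor hB t (t k) k n = fall_factor hW t (t k) k n.
  by apply: eq_big_nat => i ir; rewrite same_rise //; lia.
have tle i j : (i <= j <= n)%N -> t i <= t j.
  by case/andP=> ij jn; apply: (increasing_le I).
have L0 : 0 <= rise_factor hW t (t k) m k by apply: rise_factor_ge0 => i ?; apply: tle; lia.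
have R0 : 0 <= fall_factor hW t (t k) k n by apply: fall_factor_ge0 => i ?; apply: tle; lia.
have seg h i : pl_breaks h t n -> (i < m)%N ->
    h (t i.+1) = h (t i) + signed (rising h t i) (t i.+1 - t i).
  move=> P im; apply: (pl_segment P); first lia.
  by rewrite lexx andbT; apply/ltW/I; lia.
have := rise_factor_shift_le (t := t) (hW := hW) (hB := hB) (x := t k) (eps := eps) (m := m) (m' := m')
  (fun i im => I i ltac:(lia)) ltac:(apply: (increasing_lt I); lia) m'm tm'
  (fun i => seg _ i PW) (fun i => seg _ i PB) (Bpast (t m) (lexx _)) (fun j _ => Blow (t j)).
move: (rise_factor hW t (t k) 0 m) (rise_factor hB t (t k) 0 m) => LW LB le_LB.
set q := (_ / _) in le_LB *; set M := rise_factor _ _ _ m k; set F := fall_factor _ _ _ k n.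
have := ler_wpM2r (mulr_ge0 L0 R0) le_LB.
have -> : LW * M * F * q = LW * q * (M * F) by ring.
by have -> : LB * M * F = LB * (M * F) by ring.
Qed.

End ResidueComparison.

Section EpsShift.
Variable R : realType.
Variables (Om : R -> R) (eps b zp : R).
Hypothesis Om_diagram : continual_diagram Om.
Hypothesis eps_gt0 : 0 < eps.
Hypothesis b_gt0 : 0 < b.
Hypothesis zp_cross : zp + b = Om (zp - eps) + eps.

Let W z := Om (z - eps).
Let Ob := eps_shift Om eps (fun x => x + b).

Let Ob_clamp z : Ob z = clamp (W z - eps) (z + b) (W z + eps).
Proof. by []. Qed.

Lemma eps_shift_ge z : W z - eps <= Ob z.
Proof. by rewrite Ob_clamp; apply: clamp_ge; have := eps_gt0; lra. Qed.

Lemma eps_shift_past_cross z : zp <= z -> Ob z = W z + eps.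
Proof.
move=> zz; rewrite Ob_clamp; apply: clamp_hi; first by have := eps_gt0; lra.
have [_ [Lip _]] := Om_diagram; have := Lip (z - eps) (zp - eps).
rewrite (_ : z - eps - (zp - eps) = z - zp); last by ring.
rewrite [`|z - zp|]ger0_norm ?subr_ge0 // ler_norml => /andP[_ Wz].
by have := zp_cross; rewrite /W; lra.
Qed.

Lemma eps_shift_tails : exists2 Q : R, 0 < Q &
  [/\ forall z, z <= - Q -> W z = eps - z, forall z, Q <= z -> W z = z - eps,
      forall z, z <= - Q -> Ob z = 0 - z & forall z, Q <= z -> Ob z = z + 0].
Proof.
have [_ [_ [M HM]]] := Om_diagram; have [e0 b0] := (eps_gt0, b_gt0).
have [nM nM0] := (ler_norm M, normr_ge0 M).
have WL z : z <= - (`|M| + eps + b + 1) -> W z = eps - z.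
  move=> zq; have nz : `|z - eps| = eps - z by rewrite ler0_norm; [ring | lra].
  by rewrite /W HM nz //; lra.
have WR z : `|M| + eps + b + 1 <= z -> W z = z - eps.
  move=> zq; have nz : `|z - eps| = z - eps by rewrite ger0_norm //; lra.
  by rewrite /W HM nz //; lra.
exists (`|M| + eps + b + 1); first lra.
split=> // z zq; rewrite Ob_clamp.
  rewrite WL // (_ : eps - z - eps = 0 - z); last by ring.
  by apply: clamp_lo; lra.
rewrite WR // (_ : z - eps + eps = z + 0); last by ring.
by apply: clamp_hi; lra.
Qed.

Lemma common_breaks S : affine_between Om S -> exists T : seq R,
  [/\ sorted <%R T, pl_breaks W (nth 0 T) (size T).-1,
      pl_breaks Ob (nth 0 T) (size T).-1, zp \in T & zp - eps \in T].
Proof.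
move=> HS; have [Q Q0 [WL WR BL BR]] := eps_shift_tails.
(* [-+ Q] and [-+ (Q + 1)] make the tails fit [pl_breaks]. *)
set extra := [:: - Q - 1; - Q; Q; Q + 1; zp; zp - eps].
set B := map (fun s => s + eps) S ++ extra.
have HW : affine_between W B.
  by apply: affine_between_sub _ (affine_between_shift (e := eps) HS) => y ys; rewrite mem_cat ys.
have QB : Q \in B by rewrite mem_cat !inE eqxx !orbT.
have HB : affine_between Ob (clamp_breaks W eps b B).
  exact: (affine_between_clamp eps_gt0 HW QB WR).
set T := sort <=%R (undup (clamp_breaks W eps b B)).
have sT : sorted <%R T by rewrite sort_lt_sorted undup_uniq.
have BT : {subset clamp_breaks W eps b B <= T} by move=> y; rewrite mem_sort mem_undup.
have extraT y : y \in extra -> y \in T.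
  by move=> yl; apply: BT; rewrite !mem_cat yl orbT.
exists T; split => //; try by apply: extraT; rewrite !inE eqxx ?orbT.
  apply: (pl_breaks_sorted (cL := eps) (cR := - eps)) Q0 sT _ WL WR _ _ _ _;
    try by apply: extraT; rewrite !inE eqxx ?orbT.
  by apply: affine_between_sub HW => y yB; apply: BT; rewrite mem_cat yB.
apply: (pl_breaks_sorted (cL := 0) (cR := 0)) Q0 sT _ BL BR _ _ _ _;
  try by apply: extraT; rewrite !inE eqxx ?orbT.
exact: affine_between_sub BT HB.
Qed.

Lemma eps_shift_residue_le S xsW ysW xs' ys' y : affine_between Om S ->
  extrema_of W xsW ysW -> extrema_of Ob xs' ys' -> y \in xsW -> zp < y ->
  y \in xs' /\ residue xsW ysW y * Pmin eps zp y <= residue xs' ys' y.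
Proof.
move=> HS EW EB yW zy; have e0 := eps_gt0.
have [T [sT PW PB zT zeT]] := common_breaks HS.
have [n nS] : exists n, size T = n.+1 by case: (T) zT => // u s _; exists (size s).
rewrite nS /= in PW PB; set t := nth 0 T in PW PB.
have idx u : u \in T -> exists2 j, (j <= n)%N & u = t j.
  by move=> uT; exists (index u T); [rewrite -ltnS -nS index_mem | rewrite /t nth_index].
have [[m mn tm] [m' m'n tm']] := (idx zp zT, idx _ zeT).
have [k [kn yk vk]] : pl_valley W t n y by apply/(pl_local_min PW); case: EW => _ _ <- _.
have I := pl_increasing PW.
have mk : (m < k)%N.
  by apply/contraT; rewrite -leqNgt => km; have := increasing_le I km mn; lra.
have m'm : (m' <= m)%N.
  by apply/contraT; rewrite -ltnNge => mm'; have := increasing_le I (ltnW mm') m'n; lra.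
have Bpast z : t m <= z -> Ob z = W z + eps by rewrite -tm; exact: eps_shift_past_cross.
have mkn : (m < k < n)%N by rewrite mk; case/andP: kn.
have tmm : t m' = t m - eps by rewrite -tm -tm'.
have [yB le] := residue_le_past_cross PW PB EW EB m'm mkn tmm Bpast eps_shift_ge vk.
have -> : Pmin eps zp y = (y - zp) / (y + eps - zp) by rewrite /Pmin ifT // ltW.
by rewrite yk tm.
Qed.

End EpsShift.

Lemma Pmin_eq0 (R : realType) (eps zp y : R) : y <= zp -> Pmin eps zp y = 0.
Proof.
rewrite /Pmin; case: ifP => // zy yz.
have -> : y = zp by apply/le_anti; rewrite yz zy.
by rewrite subrr mul0r.
Qed.

Lemma zigzag_extrema_of (R : realType) (w : R -> R) xs ys :
  zigzag_extrema w xs ys -> extrema_of w xs ys.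
Proof.
case=> sx [sy [Hx Hy]]; split; rewrite ?lt_sorted_uniq // => x.
  by split => /Hx.
by split => /Hy.
Qed.

Theorem proposition5p1 (R : realType) (Om : R -> R) (xs ys : seq R)
  (eps b zp : R) (xs' ys' : seq R) (phi : R -> R) :
  zigzag Om -> zigzag_extrema Om xs ys ->
  0 < eps -> 0 < b ->
  (zp + b = Om (zp - eps) + eps) ->
  (forall z, z + b = Om (z - eps) + eps -> z <= zp) ->
  zigzag_extrema (eps_shift Om eps (fun x => x + b)) xs' ys' ->
  (forall z, 0 <= phi z) ->
  transition_integral xs ys (fun z => phi (z + eps) * Pmin eps zp (z + eps))
    <= transition_integral xs' ys' phi.
Proof.
move=> [HD [S HS]] /zigzag_extrema_of E e0 b0 Hzp _ /zigzag_extrema_of E' phi0.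
have EW := extrema_of_shift eps E.
have [T [_ _ PB _ _]] := common_breaks zp HD e0 b0 HS.
case: (E) (E') (EW) => Ux _ _ _ [Ux' _ _ _] [UxW _ _ _].
rewrite !transition_integral_residue //.
set xsW := [seq x + eps | x <- xs]; set ysW := [seq y + eps | y <- ys].
have -> : \sum_(x <- xs) residue xs ys x * (phi (x + eps) * Pmin eps zp (x + eps)) =
    \sum_(y <- xsW) residue xsW ysW y * (phi y * Pmin eps zp y).
  by rewrite big_map; apply: eq_bigr => x _; rewrite residue_shift.
apply: sum_le_dominated => // [y yB|y yW].
  by rewrite mulr_ge0 ?(pl_residue_ge0 PB E').
have [yz|zy] := leP y zp; first by left; rewrite Pmin_eq0 // !mulr0.
have [yB le] := eps_shift_residue_le HD e0 b0 Hzp HS EW E' yW zy.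
right; split => //; rewrite [phi y * _]mulrC mulrA.
by apply: ler_wpM2r; [exact: phi0 | exact: le].
Qed.
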